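(* Let $C\subseteq\mathbb R^d$ be a full-dimensional pointed cone, let $\Gamma$ be the set of points of $C$ lying outside some (possibly empty) truncation of $C$, let $V$ be a countable subset of $C$, and set $U=V+\Gamma$. Then the boundary $\partial U=\overline U\setminus U^\circ$ has Lebesgue measure zero.
   Context: A cone is a subset of $\mathbb R^d$ closed under nonnegative real linear combinations; full-dimensional means nonempty interior; pointed means closed and there is $\mathbf b$ with $\langle\mathbf u,\mathbf b\rangle>0$ for all nonzero $\mathbf u$ in the cone. For such $\mathbf b$ and real $\alpha\ge0$, $H=\{\mathbf u:\langle\mathbf u,\mathbf b\rangle<\alpha\}$ is a truncating halfspace and $C\cap H$ is a truncation of $C$ (empty when $\alpha=0$); $\Gamma=C\setminus H$. $V+\Gamma$ is the Minkowski sum; $\overline U$ and $U^\circ$ denote closure and interior. *)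

From Stdlib Require Import Reals.
From Stdlib Require Vectors.Fin.
Open Scope R_scope.

Definition Vec (d : nat) := Fin.t d -> R.

Fixpoint sumFin (n : nat) : (Fin.t n -> R) -> R :=
  match n with
  | O => fun _ => 0
  | S m => fun f => f Fin.F1 + sumFin m (fun i => f (Fin.FS i))
  end.

Fixpoint prodFin (n : nat) : (Fin.t n -> R) -> R :=
  match n with
  | O => fun _ => 1
  | S m => fun f => f Fin.F1 * prodFin m (fun i => f (Fin.FS i))
  end.

Definition vzero {d} : Vec d := fun _ => 0.
Definition vadd {d} (u v : Vec d) : Vec d := fun i => u i + v i.
Definition vscale {d} (a : R) (u : Vec d) : Vec d := fun i => a * u i.
Definition inner {d} (u v : Vec d) : R := sumFin d (fun i => u i * v i).
Definition vnorm {d} (u : Vec d) : R := sqrt (inner u u).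
Definition dist {d} (u v : Vec d) : R := vnorm (fun i => u i - v i).

Definition VSet (d : nat) := Vec d -> Prop.

Definition interior {d} (A : VSet d) : VSet d :=
  fun x => exists r, 0 < r /\ forall y, dist x y < r -> A y.
Definition closure {d} (A : VSet d) : VSet d :=
  fun x => forall r, 0 < r -> exists y, A y /\ dist x y < r.
Definition is_closed {d} (A : VSet d) : Prop := forall x, closure A x -> A x.

Definition boundary {d} (A : VSet d) : VSet d :=
  fun x => closure A x /\ ~ interior A x.

Definition is_cone {d} (C : VSet d) : Prop :=
  C vzero /\
  forall a b u v, 0 <= a -> 0 <= b -> C u -> C v -> C (vadd (vscale a u) (vscale b v)).

Definition full_dimensional {d} (C : VSet d) : Prop := exists x, interior C x.

Definition pointing_vector {d} (C : VSet d) (b : Vec d) : Prop :=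
  forall u, C u -> u <> vzero -> 0 < inner u b.

Definition pointed {d} (C : VSet d) : Prop :=
  is_closed C /\ exists b, pointing_vector C b.

Definition halfspace {d} (b : Vec d) (alpha : R) : VSet d :=
  fun u => inner u b < alpha.

Definition setminus {d} (A B : VSet d) : VSet d := fun x => A x /\ ~ B x.

Definition minkowski_sum {d} (A B : VSet d) : VSet d :=
  fun x => exists a c, A a /\ B c /\ x = vadd a c.

Definition countable_set {d} (A : VSet d) : Prop :=
  exists f : nat -> Vec d, forall x, A x -> exists n, f n = x.

Definition subset {d} (A B : VSet d) : Prop := forall x, A x -> B x.

(* Lebesgue measure zero (Lebesgue outer measure zero): for every eps > 0 the
   set is covered by countably many closed boxes (None = empty box) whose total
   volume is at most eps. *)
Definition box_mem {d} (bx : option (Vec d * Vec d)) (x : Vec d) : Prop :=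
  match bx with
  | None => False
  | Some (lo, hi) => forall i, lo i <= x i <= hi i
  end.
Definition box_vol {d} (bx : option (Vec d * Vec d)) : R :=
  match bx with
  | None => 0
  | Some (lo, hi) => prodFin d (fun i => Rmax 0 (hi i - lo i))
  end.

Definition lebesgue_null {d} (A : VSet d) : Prop :=
  forall eps, 0 < eps ->
    exists boxes : nat -> option (Vec d * Vec d),
      (forall x, A x -> exists n, box_mem (boxes n) x) /\
      (forall N, sum_f_R0 (fun n => box_vol (boxes n)) N <= eps).

From Pilot Require Import Defs.
From Stdlib Require Import Reals Lra Lia List.
From Stdlib Require Cantor FinFun ClassicalEpsilon FunctionalExtensionality Classical_Prop.
(* Reals also defines [dist], [interior] and [closure]. *)
Import Defs.
Open Scope R_scope.

(* Since <c, b> >= 0 on C, the set U = V + Gamma satisfies U + C ⊆ U. Choose p with an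
   open cube of radius 2 around p inside C. If x lies in the closure of U and a cube of
   radius s around v lies in C, then x + v is interior to U. Writing points as t p + z with
   z in a fixed hyperplane, it follows that two boundary points whose z-parts differ by at
   most h differ in t by less than h: the boundary is a 1-Lipschitz graph over the
   hyperplane. Above a grid cell of mesh h in a bounded window it therefore fits in one box
   of volume O(h^d); the O(h^(1-d)) cells have total volume O(h). Countably many windows
   exhaust the hyperplane. *)

Lemma fin_cases {n} (P : Fin.t (S n) -> Prop) :
  P Fin.F1 -> (forall j, P (Fin.FS j)) -> forall i, P i.
Proof. intros H1 H2 i. exact (Fin.caseS' i P H1 H2). Qed.

Lemma fin0_empty (i : Fin.t 0) : False.
Proof. exact (Fin.case0 (fun _ => False) i). Qed.

Lemma Rabs_le_inv a b : Rabs a <= b -> - b <= a <= b.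
Proof. unfold Rabs; destruct (Rcase_abs a); intros; lra. Qed.

Lemma sumFin_ext n (f g : Fin.t n -> R) :
  (forall i, f i = g i) -> sumFin n f = sumFin n g.
Proof.
  revert f g; induction n; intros f g H; simpl; [reflexivity|].
  rewrite H, (IHn _ (fun i => g (Fin.FS i))); auto.
Qed.

Lemma sumFin_add n (f g : Fin.t n -> R) :
  sumFin n (fun i => f i + g i) = sumFin n f + sumFin n g.
Proof.
  revert f g; induction n; intros f g; simpl; [ring|].
  rewrite (IHn (fun i => f (Fin.FS i)) (fun i => g (Fin.FS i))). ring.
Qed.

Lemma sumFin_nonneg n (f : Fin.t n -> R) : (forall i, 0 <= f i) -> 0 <= sumFin n f.
Proof.
  revert f; induction n; intros f H; simpl; [lra|].
  pose proof (IHn (fun i => f (Fin.FS i)) (fun i => H _)). pose proof (H Fin.F1). lra.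
Qed.

Lemma sumFin_ge_term n (f : Fin.t n -> R) :
  (forall i, 0 <= f i) -> forall i, f i <= sumFin n f.
Proof.
  revert f; induction n; intros f H i; [destruct (fin0_empty i)|].
  pose proof (sumFin_nonneg n (fun i => f (Fin.FS i)) (fun i => H _)).
  pose proof (H Fin.F1).
  revert i; apply fin_cases; simpl; [lra|].
  intro j. pose proof (IHn (fun i => f (Fin.FS i)) (fun i => H _) j). simpl in *. lra.
Qed.

Lemma sumFin_le_const n (f : Fin.t n -> R) B :
  (forall i, f i <= B) -> sumFin n f <= INR n * B.
Proof.
  revert f; induction n; intros f H; [simpl; lra|].
  pose proof (IHn (fun i => f (Fin.FS i)) (fun i => H _)). pose proof (H Fin.F1).
  rewrite S_INR. simpl sumFin. lra.
Qed.

Lemma prodFin_nonneg n (f : Fin.t n -> R) : (forall i, 0 <= f i) -> 0 <= prodFin n f.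
Proof.
  revert f; induction n; intros f Hf; simpl; [lra|].
  apply Rmult_le_pos; auto.
Qed.

Lemma prodFin_le_scaled n (f g : Fin.t n -> R) h :
  0 <= h -> (forall i, 0 <= f i <= h * g i) -> prodFin n f <= h ^ n * prodFin n g.
Proof.
  revert f g; induction n; intros f g Hh H; simpl; [lra|].
  pose proof (IHn (fun i => f (Fin.FS i)) (fun i => g (Fin.FS i)) Hh (fun i => H _)).
  pose proof (prodFin_nonneg n (fun i => f (Fin.FS i)) (fun i => proj1 (H _))).
  destruct (H Fin.F1).
  replace (h * h ^ n * (g Fin.F1 * prodFin n (fun i => g (Fin.FS i))))
    with ((h * g Fin.F1) * (h ^ n * prodFin n (fun i => g (Fin.FS i)))) by ring.
  apply Rmult_le_compat; auto.
Qed.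

Lemma coord_le_vnorm {d} (w : Vec d) i : Rabs (w i) <= vnorm w.
Proof.
  unfold vnorm, inner. rewrite <- sqrt_Rsqr_abs. apply sqrt_le_1_alt.
  apply (sumFin_ge_term d (fun i => w i * w i)). intro; nra.
Qed.

Lemma coord_le_dist {d} (x y : Vec d) i : Rabs (x i - y i) <= dist x y.
Proof. exact (coord_le_vnorm (fun i => x i - y i) i). Qed.

Lemma dist_le_coord_bound {d} (x y : Vec d) s : 0 <= s ->
  (forall i, Rabs (x i - y i) <= s) -> dist x y <= (INR d + 1) * s.
Proof.
  intros Hs H. pose proof (pos_INR d).
  unfold dist, vnorm. rewrite <- (sqrt_Rsqr ((INR d + 1) * s)) by nra.
  apply sqrt_le_1_alt. unfold inner, Rsqr.
  eapply Rle_trans; [apply (sumFin_le_const d _ (s * s)) | nra].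
  intro i. destruct (Rabs_le_inv _ _ (H i)). nra.
Qed.

Lemma box_vol_nonneg {d} (bx : option (Vec d * Vec d)) : 0 <= box_vol bx.
Proof.
  destruct bx as [[lo hi]|]; simpl; [|lra].
  apply prodFin_nonneg. intro i; apply Rmax_l.
Qed.

Lemma lebesgue_null_empty {d} (A : VSet d) : (forall x, ~ A x) -> lebesgue_null A.
Proof.
  intros H eps Heps. exists (fun _ => None). split.
  - intros x Hx; destruct (H x Hx).
  - intro N. rewrite sum_eq_R0 by reflexivity. lra.
Qed.

Lemma sum_f_R0_le_support (f : nat -> R) L B :
  0 <= B -> (forall k, 0 <= f k) -> (forall k, (k < L)%nat -> f k <= B) ->
  (forall k, (L <= k)%nat -> f k = 0) -> forall M, sum_f_R0 f M <= INR L * B.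
Proof.
  intros HB Hf Hlt Hge.
  assert (H : forall M, sum_f_R0 f M <= INR (Nat.min (S M) L) * B).
  { induction M; simpl sum_f_R0.
    - destruct L; simpl.
      + rewrite Hge by lia. lra.
      + specialize (Hlt 0%nat ltac:(lia)). lra.
    - destruct (Nat.lt_ge_cases (S M) L).
      + replace (Nat.min (S (S M)) L) with (S (Nat.min (S M) L)) by lia.
        rewrite S_INR. specialize (Hlt (S M) H). lra.
      + replace (Nat.min (S (S M)) L) with (Nat.min (S M) L) by lia.
        rewrite (Hge (S M)) by lia. lra. }
  intro M. eapply Rle_trans; [apply H|]. apply Rmult_le_compat_r; auto.
  apply le_INR. lia.
Qed.

Lemma sum_f_R0_half_powers eps N :
  sum_f_R0 (fun k => eps * (/2) ^ S k) N = eps - eps * (/2) ^ S N.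
Proof. induction N as [|N IH]; [simpl; field|]. rewrite tech5, IH. simpl. field. Qed.

Fixpoint lsum {A} (f : A -> R) (l : list A) : R :=
  match l with nil => 0 | a :: l => f a + lsum f l end.

Lemma lsum_app {A} (f : A -> R) l1 l2 : lsum f (l1 ++ l2) = lsum f l1 + lsum f l2.
Proof. induction l1; simpl; [ring | rewrite IHl1; ring]. Qed.

Lemma lsum_map {A B} (f : B -> R) (g : A -> B) l :
  lsum f (map g l) = lsum (fun x => f (g x)) l.
Proof. induction l; simpl; congruence. Qed.

Lemma lsum_ext {A} (f g : A -> R) l : (forall x, f x = g x) -> lsum f l = lsum g l.
Proof. intros H; induction l; simpl; congruence. Qed.

Lemma lsum_nonneg {A} (f : A -> R) l : (forall x, 0 <= f x) -> 0 <= lsum f l.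
Proof. intros H; induction l; simpl; [lra | specialize (H a); lra]. Qed.

Lemma lsum_le_incl {A} (f : A -> R) (l l' : list A) :
  (forall x, 0 <= f x) -> NoDup l -> incl l l' -> lsum f l <= lsum f l'.
Proof.
  intros Hf Hnd. revert l'.
  induction Hnd as [|a l Hna Hnd IH]; intros l' Hincl; simpl; [apply lsum_nonneg; auto|].
  destruct (in_split a l' (Hincl a (in_eq a l))) as [l1 [l2 ->]].
  assert (Hl : lsum f l <= lsum f (l1 ++ l2)).
  { apply IH. intros x Hx.
    destruct (in_app_or _ _ _ (Hincl x (in_cons a x l Hx))) as [H|[H|H]];
      apply in_or_app; auto.
    subst; contradiction. }
  rewrite !lsum_app in *. simpl. lra.
Qed.

Lemma sum_f_R0_lsum (f : nat -> R) N : sum_f_R0 f N = lsum f (seq 0 (S N)).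
Proof.
  induction N; simpl sum_f_R0; [simpl; ring|].
  rewrite IHN. replace (S (S N)) with (S N + 1)%nat by lia.
  rewrite seq_app, lsum_app. simpl. ring.
Qed.

Lemma lsum_list_prod {A B} (g : A * B -> R) l l' :
  lsum g (list_prod l l') = lsum (fun k => lsum (fun i => g (k, i)) l') l.
Proof. induction l; simpl; [reflexivity|]. rewrite lsum_app, lsum_map, IHl. reflexivity. Qed.

(* The first [N+1] values of [Cantor.of_nat] are distinct pairs with both entries at most [N]. *)
Lemma sum_f_R0_cantor_le (g : nat * nat -> R) N : (forall x, 0 <= g x) ->
  sum_f_R0 (fun n => g (Cantor.of_nat n)) N
  <= sum_f_R0 (fun k => sum_f_R0 (fun i => g (k, i)) N) N.
Proof.
  intro Hg.
  rewrite !sum_f_R0_lsum, <- lsum_map.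
  rewrite (lsum_ext _ (fun k => lsum (fun i => g (k, i)) (seq 0 (S N))))
    by (intro; apply sum_f_R0_lsum).
  rewrite <- lsum_list_prod.
  apply lsum_le_incl; auto.
  - apply FinFun.Injective_map_NoDup; [|apply seq_NoDup].
    intros a b Hab.
    rewrite <- (Cantor.cancel_to_of a), <- (Cantor.cancel_to_of b), Hab. reflexivity.
  - intros [x y] Hxy. apply in_map_iff in Hxy. destruct Hxy as [n [Hn Hin]].
    apply in_seq in Hin.
    pose proof (Cantor.to_nat_non_decreasing x y) as Hle.
    rewrite <- Hn, Cantor.cancel_to_of in Hle.
    apply in_prod; apply in_seq; lia.
Qed.

Lemma lebesgue_null_countable_union {d} (A : VSet d) (B : nat -> VSet d) :
  (forall k, lebesgue_null (B k)) -> (forall x, A x -> exists k, B k x) ->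
  lebesgue_null A.
Proof.
  intros HB Hcov eps Heps.
  assert (Hpos : forall k, 0 < eps * (/2) ^ S k).
  { intro k. apply Rmult_lt_0_compat; auto. apply pow_lt; lra. }
  destruct (ClassicalEpsilon.choice _ (fun k => HB k _ (Hpos k))) as [bx Hbx].
  set (vol := fun ki : nat * nat => box_vol (bx (fst ki) (snd ki))).
  exists (fun n => bx (fst (Cantor.of_nat n)) (snd (Cantor.of_nat n))). split.
  - intros x Hx. destruct (Hcov x Hx) as [k Hk]. destruct (proj1 (Hbx k) x Hk) as [i Hi].
    exists (Cantor.to_nat (k, i)). rewrite Cantor.cancel_of_to. exact Hi.
  - intro N.
    apply (Rle_trans _ _ _ (sum_f_R0_cantor_le vol N (fun _ => box_vol_nonneg _))).
    apply (Rle_trans _ (sum_f_R0 (fun k => eps * (/2) ^ S k) N)).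
    + apply sum_Rle. intros k _. apply (proj2 (Hbx k)).
    + rewrite sum_f_R0_half_powers. pose proof (Hpos N). lra.
Qed.

Lemma vec_ext {d} (u v : Vec d) : (forall i, u i = v i) -> u = v.
Proof. apply FunctionalExtensionality.functional_extensionality. Qed.

Lemma cone_scale {d} (C : VSet d) a u : is_cone C -> 0 <= a -> C u -> C (vscale a u).
Proof.
  intros [H0 H] Ha Hu.
  replace (vscale a u) with (vadd (vscale a u) (vscale 0 vzero)).
  - apply H; auto; lra.
  - apply vec_ext; intro i; unfold vadd, vscale, vzero; ring.
Qed.

Lemma cone_add {d} (C : VSet d) u v : is_cone C -> C u -> C v -> C (vadd u v).
Proof.
  intros [H0 H] Hu Hv.
  replace (vadd u v) with (vadd (vscale 1 u) (vscale 1 v)).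
  - apply H; auto; lra.
  - apply vec_ext; intro i; unfold vadd, vscale; ring.
Qed.

Lemma inner_add_l {d} (u v b : Vec d) : inner (vadd u v) b = inner u b + inner v b.
Proof. unfold inner, vadd. rewrite <- sumFin_add. apply sumFin_ext; intro; ring. Qed.

Lemma inner_nonneg_pointing {d} (C : VSet d) b c :
  pointing_vector C b -> C c -> 0 <= inner c b.
Proof.
  intros Hb Hc. destruct (Classical_Prop.classic (c = vzero)) as [->|Hn].
  - assert (H0 : inner (@vzero d) b = inner (@vzero d) b + inner (@vzero d) b).
    { rewrite <- inner_add_l. f_equal. apply vec_ext; intro; unfold vadd, vzero; ring. }
    lra.
  - left; apply Hb; auto.
Qed.

Definition cube_in {d} (C : VSet d) (v : Vec d) (r : R) : Prop :=
  forall w, (forall i, Rabs (w i - v i) < r) -> C w.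

Lemma cube_in_scale {d} (C : VSet d) q r l :
  is_cone C -> cube_in C q r -> 0 < l -> cube_in C (vscale l q) (l * r).
Proof.
  intros Hc Hq Hl w Hw.
  replace w with (vscale l (vscale (/ l) w)) by (apply vec_ext; intro i; unfold vscale; field; lra).
  apply cone_scale; [auto | lra |]. apply Hq. intro i. specialize (Hw i). unfold vscale in *.
  replace (/ l * w i - q i) with (/ l * (w i - l * q i)) by (field; lra).
  rewrite Rabs_mult, Rabs_inv, (Rabs_right l) by lra.
  apply Rmult_lt_reg_l with l; auto. field_simplify; lra.
Qed.

Lemma cube_in_of_interior {d} (C : VSet d) x : interior C x -> exists s, 0 < s /\ cube_in C x s.
Proof.
  intros [r [Hr Hball]]. pose proof (pos_INR d).
  exists (r / (INR d + 2)). split; [apply Rdiv_lt_0_compat; lra|].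
  intros w Hw. apply Hball.
  assert (Hs : 0 <= r / (INR d + 2)) by (apply Rlt_le, Rdiv_lt_0_compat; lra).
  eapply Rle_lt_trans.
  - apply (dist_le_coord_bound x w _ Hs). intro i. rewrite Rabs_minus_sym. left; apply Hw.
  - replace ((INR d + 1) * (r / (INR d + 2))) with (r * ((INR d + 1) / (INR d + 2)))
      by (field; lra).
    rewrite <- (Rmult_1_r r) at 2. apply Rmult_lt_compat_l; auto.
    apply (Rmult_lt_reg_r (INR d + 2)); [lra|]. field_simplify; lra.
Qed.

(* [p Fin.F1 <> 0] makes the coordinate [height] along [p] below well defined. *)
Lemma full_cone_cube {n} (C : VSet (S n)) : is_cone C -> full_dimensional C ->
  exists p, cube_in C p 2 /\ p Fin.F1 <> 0.
Proof.
  intros Hc [x0 Hx0]. destruct (cube_in_of_interior C x0 Hx0) as [s [Hs Hcube]].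
  set (q := fun i => x0 i + Fin.caseS' i (fun _ => R)
                (if Req_dec_T (x0 Fin.F1) 0 then s / 2 else 0) (fun _ => 0)).
  assert (Hq : cube_in C q (s / 2)).
  { assert (Hshift : forall i, Rabs (q i - x0 i) <= s / 2).
    { unfold q. apply fin_cases; [|intro j]; simpl;
        [destruct Req_dec_T|]; rewrite ?Rplus_minus_l, ?Rabs_R0; try (rewrite Rabs_right); lra. }
    intros w Hw. apply Hcube. intro i. specialize (Hw i). specialize (Hshift i).
    replace (w i - x0 i) with ((w i - q i) + (q i - x0 i)) by ring.
    eapply Rle_lt_trans; [apply Rabs_triang | lra]. }
  assert (Hq1 : q Fin.F1 <> 0) by (unfold q; simpl; destruct Req_dec_T; lra).
  exists (vscale (4 / s) q). split.
  - replace 2 with (4 / s * (s / 2)) by (field; lra).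
    apply cube_in_scale; auto. apply Rdiv_lt_0_compat; lra.
  - unfold vscale. apply Rmult_integral_contrapositive_currified; auto.
    apply Rgt_not_eq, Rdiv_lt_0_compat; lra.
Qed.

Definition cone_stable {d} (C U : VSet d) : Prop :=
  forall u c, U u -> C c -> U (vadd u c).

Lemma cone_stable_truncation_complement {d} (C : VSet d) b alpha V :
  is_cone C -> pointing_vector C b ->
  cone_stable C (minkowski_sum V (setminus C (halfspace b alpha))).
Proof.
  intros Hc Hb u c [a [g [Ha [[HgC Hgb] ->]]]] HcC.
  exists a, (vadd g c). split; [auto|]. split.
  - split; [apply cone_add; auto|]. unfold halfspace in *. rewrite inner_add_l.
    pose proof (inner_nonneg_pointing C b c Hb HcC). lra.
  - apply vec_ext; intro i; unfold vadd; ring.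
Qed.

Lemma interior_add_cube {d} (C U : VSet d) x v r :
  cone_stable C U -> closure U x -> cube_in C v r -> 0 < r -> interior U (vadd x v).
Proof.
  intros HU Hx Hv Hr.
  destruct (Hx (r / 2)) as [y [Hy Hxy]]; [lra|].
  exists (r / 2). split; [lra|]. intros z Hz.
  replace z with (vadd y (fun i => z i - y i)) by (apply vec_ext; intro; unfold vadd; ring).
  apply HU; auto. apply Hv. intro i.
  pose proof (coord_le_dist x y i). pose proof (coord_le_dist (vadd x v) z i).
  unfold vadd in *.
  replace (z i - y i - v i) with (- (x i + v i - z i) + (x i - y i)) by ring.
  eapply Rle_lt_trans; [apply Rabs_triang|]. rewrite Rabs_Ropp. lra.
Qed.

Fixpoint digits (n N k : nat) {struct n} : Fin.t n -> nat :=
  match n return Fin.t n -> nat with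
  | O => fun _ => 0%nat
  | S n' => fun j => Fin.caseS' j (fun _ => nat) (k mod N) (digits n' N (k / N))
  end.

Lemma digits_surj n N (a : Fin.t n -> nat) : (0 < N)%nat -> (forall j, (a j < N)%nat) ->
  exists k, (k < N ^ n)%nat /\ forall j, digits n N k j = a j.
Proof.
  revert a; induction n; intros a HN Ha.
  - exists 0%nat. split; [simpl; lia|]. intro j; destruct (fin0_empty j).
  - destruct (IHn (fun j => a (Fin.FS j)) HN (fun j => Ha _)) as [k [Hk Hdig]].
    exists (a Fin.F1 + k * N)%nat. split.
    + pose proof (Ha Fin.F1). simpl. nia.
    + apply fin_cases; simpl.
      * rewrite Nat.Div0.mod_add. apply Nat.mod_small, Ha.
      * intro j. rewrite Nat.div_add, Nat.div_small by (try apply Ha; lia). apply Hdig.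
Qed.

Lemma grid_index N h u : (0 < N)%nat -> 0 < h -> 0 <= u <= INR N * h ->
  exists a, (a < N)%nat /\ INR a * h <= u <= INR (S a) * h.
Proof.
  revert u; induction N; intros u HN Hh Hu; [lia|].
  destruct (Nat.eq_dec N 0) as [->|HN0].
  - exists 0%nat. simpl in *. split; [lia | lra].
  - destruct (Rle_dec u (INR N * h)).
    + destruct (IHN u ltac:(lia) Hh ltac:(lra)) as [a [Ha1 Ha2]]. exists a. split; [lia | auto].
    + exists N. split; [lia | lra].
Qed.

Lemma grid_cell_exists {n} (z : Fin.t n -> R) r h N :
  (0 < N)%nat -> 0 < h -> INR N * h = 2 * r -> (forall j, Rabs (z j) <= r) ->
  exists a, (forall j, a j < N)%nat /\
    forall j, - r + INR (a j) * h <= z j <= - r + INR (S (a j)) * h.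
Proof.
  intros HN Hh HNh Hz.
  destruct (ClassicalEpsilon.choice
              (fun j a => (a < N)%nat /\ INR a * h <= z j + r <= INR (S a) * h)) as [a Ha].
  { intro j. apply grid_index; auto. rewrite HNh. destruct (Rabs_le_inv _ _ (Hz j)). lra. }
  exists a. split; intro j; destruct (Ha j); [auto | lra].
Qed.

Lemma grid_volume_le (N n : nat) h c K eps : 0 <= K ->
  INR N * h = c -> c ^ n * K * h <= eps -> INR (N ^ n) * (h ^ S n * K) <= eps.
Proof.
  intros HK Hc Heps. rewrite pow_INR.
  replace (INR N ^ n * (h ^ S n * K)) with ((INR N * h) ^ n * K * h)
    by (rewrite Rpow_mult_distr; simpl; ring).
  rewrite Hc. exact Heps.
Qed.

Section AlongDirection.
Context {n : nat} (p : Vec (S n)).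
Hypothesis Hp1 : p Fin.F1 <> 0.

Definition height (x : Vec (S n)) : R := x Fin.F1 / p Fin.F1.
Definition offset (x : Vec (S n)) (i : Fin.t (S n)) : R := x i - height x * p i.
Definition base (x : Vec (S n)) (j : Fin.t n) : R := offset x (Fin.FS j).

Lemma offset_F1 x : offset x Fin.F1 = 0.
Proof. unfold offset, height. field. exact Hp1. Qed.

Definition lipschitz_graph (D : VSet (S n)) : Prop :=
  forall x y h, D x -> D y -> 0 < h ->
    (forall j, Rabs (base y j - base x j) <= h) -> height y - height x < h.

Lemma lipschitz_graph_height (D : VSet (S n)) x y h :
  lipschitz_graph D -> D x -> D y -> 0 < h ->
  (forall j, Rabs (base y j - base x j) <= h) -> Rabs (height y - height x) < h.
Proof.
  intros HD Hx Hy Hh Hb. apply Rabs_def1.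
  - exact (HD x y h Hx Hy Hh Hb).
  - enough (height x - height y < h) by lra.
    apply (HD y x h Hy Hx Hh). intro j. rewrite Rabs_minus_sym. apply Hb.
Qed.

(* If [y] were at least [h] higher than [x] above nearly the same base point, a cube of
   radius [s = height y - height x] around [y - x] would fit in the cube of radius [2 s]
   around [s p], and [y] would be interior. *)
Lemma boundary_lipschitz_graph (C U : VSet (S n)) :
  is_cone C -> cone_stable C U -> cube_in C p 2 -> lipschitz_graph (boundary U).
Proof.
  intros Hc HU Hp x y h [Hx _] [_ Hy] Hh Hbase.
  apply Rnot_le_lt. intro Hst. set (s := height y - height x) in *.
  assert (Hoff : forall i, Rabs (offset y i - offset x i) <= h).
  { apply fin_cases; [rewrite !offset_F1, Rminus_0_r, Rabs_R0; lra | exact Hbase]. }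
  apply Hy. replace y with (vadd x (fun i => y i - x i))
    by (apply vec_ext; intro; unfold vadd; ring).
  apply (interior_add_cube C U x _ s); auto; [|lra].
  intros u Hu. apply (cube_in_scale C p 2 s Hc Hp ltac:(lra)). intro i.
  specialize (Hu i). specialize (Hoff i). unfold vscale.
  replace (u i - s * p i) with ((u i - (y i - x i)) + (offset y i - offset x i))
    by (unfold offset, s; ring).
  eapply Rle_lt_trans; [apply Rabs_triang | lra].
Qed.

Definition slab_box (T h : R) (lo hi : Vec (S n)) : option (Vec (S n) * Vec (S n)) :=
  Some ((fun i => T * p i - h * Rabs (p i) + lo i), (fun i => T * p i + h * Rabs (p i) + hi i)).

Lemma box_mem_slab_box x T h lo hi :
  Rabs (height x - T) <= h -> (forall i, lo i <= offset x i <= hi i) ->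
  box_mem (slab_box T h lo hi) x.
Proof.
  intros HT Hoff i. specialize (Hoff i). unfold offset in Hoff.
  assert (Hpi : Rabs (height x * p i - T * p i) <= h * Rabs (p i)).
  { rewrite <- Rmult_minus_distr_r, Rabs_mult.
    apply Rmult_le_compat_r; [apply Rabs_pos | exact HT]. }
  destruct (Rabs_le_inv _ _ Hpi). simpl. lra.
Qed.

Lemma box_vol_slab_box T h lo hi : 0 <= h -> (forall i, hi i - lo i <= h) ->
  box_vol (slab_box T h lo hi) <= h ^ S n * prodFin (S n) (fun i => 2 * Rabs (p i) + 1).
Proof.
  intros Hh Hw. apply prodFin_le_scaled; [exact Hh|]. intro i.
  pose proof (Hw i). pose proof (Rabs_pos (p i)).
  split; [apply Rmax_l|]. apply Rmax_lub; [nra | lra].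
Qed.

(* Corner of the grid cell with index [a] and mesh [h] in the window [[-r, r]^n];
   the first coordinate, where offsets vanish, is fixed to [0]. *)
Definition cell_corner (r h : R) (a : Fin.t n -> nat) (i : Fin.t (S n)) : R :=
  Fin.caseS' i (fun _ => R) 0 (fun j => - r + INR (a j) * h).

Lemma cell_corner_width r h a : 0 <= h ->
  forall i, cell_corner r h (fun j => S (a j)) i - cell_corner r h a i <= h.
Proof.
  intros Hh. apply fin_cases; [|intro j]; cbn -[INR]; [lra|]. rewrite S_INR. ring_simplify. lra.
Qed.

End AlongDirection.

Lemma lipschitz_graph_window_null {n} (p : Vec (S n)) (D : VSet (S n)) (k : nat) :
  p Fin.F1 <> 0 -> lipschitz_graph p D ->
  lebesgue_null (fun x => D x /\ forall j, Rabs (base p x j) <= INR k).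
Proof.
  intros Hp1 HD eps Heps.
  set (r := INR k + 1). set (K := prodFin (S n) (fun i => 2 * Rabs (p i) + 1)).
  assert (HK : 0 <= K) by (apply prodFin_nonneg; intro i; pose proof (Rabs_pos (p i)); lra).
  destruct (INR_archimed eps ((2 * r) ^ n * K) Heps) as [m Hm].
  set (h := / INR (S m)). set (N := (2 * S k * S m)%nat).
  assert (Hh : 0 < h) by (apply Rinv_0_lt_compat, lt_0_INR; lia).
  assert (HNh : INR N * h = 2 * r).
  { unfold N, h, r. rewrite !mult_INR, (S_INR k). simpl (INR 2).
    field. apply not_0_INR. lia. }
  set (cell := fun a x => forall j, - r + INR (a j) * h <= base p x j <= - r + INR (S (a j)) * h).
  (* one representative height per cell; every point of [D] above the cell is within [h] of it *)
  set (T := fun a => ClassicalEpsilon.epsilon (inhabits 0)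
                       (fun t => exists x0, D x0 /\ cell a x0 /\ height p x0 = t)).
  set (box := fun a => slab_box p (T a) h (cell_corner r h a) (cell_corner r h (fun j => S (a j)))).
  exists (fun i => if Nat.ltb i (N ^ n) then box (digits n N i) else None). split.
  - intros x [Hx Hwin].
    destruct (grid_cell_exists (base p x) r h N ltac:(unfold N; lia) Hh HNh)
      as [a [HaN Hcell]].
    { intro j. pose proof (Hwin j). unfold r. lra. }
    destruct (digits_surj n N a ltac:(unfold N; lia) HaN) as [i [Hi Hdig]].
    exists i. rewrite (proj2 (Nat.ltb_lt i (N ^ n)) Hi).
    replace (digits n N i) with a
      by (symmetry; apply FunctionalExtensionality.functional_extensionality, Hdig).
    destruct (ClassicalEpsilon.epsilon_spec (inhabits 0)
                (fun t => exists x0, D x0 /\ cell a x0 /\ height p x0 = t)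
                (ex_intro _ (height p x) (ex_intro _ x (conj Hx (conj Hcell eq_refl)))))
      as [x0 [Hx0 [Hcell0 HT]]].
    apply box_mem_slab_box.
    + fold (T a) in HT. rewrite <- HT. left.
      apply (lipschitz_graph_height p D); auto.
      intro j. apply Rabs_le. specialize (Hcell j). specialize (Hcell0 j).
      rewrite S_INR in *. lra.
    + apply fin_cases; [rewrite offset_F1 by exact Hp1; simpl; lra | intro j].
      exact (Hcell j).
  - intro M.
    apply (Rle_trans _ (INR (N ^ n) * (h ^ S n * K))).
    + apply sum_f_R0_le_support.
      * apply Rmult_le_pos; [apply pow_le; lra | exact HK].
      * intro; apply box_vol_nonneg.
      * intros i Hi. rewrite (proj2 (Nat.ltb_lt i (N ^ n)) Hi).
        apply box_vol_slab_box; [lra|]. apply cell_corner_width. lra.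
      * intros i Hi. destruct (Nat.ltb_spec i (N ^ n)); [lia | reflexivity].
    + apply (grid_volume_le N n h (2 * r)); auto.
      apply (Rmult_le_reg_r (INR (S m))); [apply lt_0_INR; lia|].
      unfold h. rewrite Rmult_assoc, Rinv_l by (apply not_0_INR; lia).
      rewrite S_INR. lra.
Qed.

Lemma lipschitz_graph_null {n} (p : Vec (S n)) (D : VSet (S n)) :
  p Fin.F1 <> 0 -> lipschitz_graph p D -> lebesgue_null D.
Proof.
  intros Hp1 HD.
  apply (lebesgue_null_countable_union D
           (fun k x => D x /\ forall j, Rabs (base p x j) <= INR k)).
  - intro k. apply lipschitz_graph_window_null; auto.
  - intros x Hx. destruct (INR_archimed 1 (vnorm (base p x)) ltac:(lra)) as [k Hk].
    exists k. split; auto. intro j. pose proof (coord_le_vnorm (base p x) j). lra.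
Qed.

Lemma boundary_dim0_empty (U : VSet 0) x : ~ boundary U x.
Proof.
  intros [Hcl Hint]. destruct (Hcl 1 ltac:(lra)) as [y [Hy _]].
  apply Hint. exists 1. split; [lra|]. intros z _.
  replace z with y; auto. apply vec_ext; intro i; destruct (fin0_empty i).
Qed.

Theorem mainTheorem12 (d : nat) (C : VSet d) (b : Vec d) (alpha : R) (V : VSet d)
  (hcone : is_cone C) (hfull : full_dimensional C) (hpointed : pointed C)
  (hb : pointing_vector C b) (halpha : 0 <= alpha)
  (hVC : subset V C) (hV : countable_set V) :
  lebesgue_null (boundary (minkowski_sum V (setminus C (halfspace b alpha)))).
Proof.
  pose proof (cone_stable_truncation_complement C b alpha V hcone hb) as Hstable.
  destruct d as [|n].
  - apply lebesgue_null_empty, boundary_dim0_empty.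
  - destruct (full_cone_cube C hcone hfull) as [p [Hp Hp1]].
    apply (lipschitz_graph_null p); auto.
    apply (boundary_lipschitz_graph p Hp1 C); auto.
Qed.
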